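(* In the setting below, $\tilde p_2\,p^s\,\pi=0$ on $\operatorname{Char}P$.
   Context: $\rho,p:\mathbb R^3\to\mathbb R$, $H:\mathbb R^3\to\mathbb R^3$ are smooth, time-independent, $\rho>0$, $\gamma$ constant, with the stationary equilibrium relation $\nabla p+H\times\operatorname{curl}H=0$; $c^2=\gamma p/\rho>0$, $0<|H|^2\ne\rho c^2$, and only points with $\xi\cdot H\neq0$, $\xi\times H\ne0$ are considered. $P$ is the $3\times3$ operator on $\mathbb R_t\times\mathbb R^3_x$: $P\beta=-\rho\partial_t^2\beta+\gamma\nabla(p\operatorname{div}\beta)+\nabla(\beta\cdot\nabla p)+(\nabla\times(\nabla\times(\beta\times H)))\times H+(\nabla\times H)\times(\nabla\times(\beta\times H))$. Its full symbol (convention $\partial\mapsto i\xi$, i.e. $P(e^{i(t\tau+x\cdot\xi)}v)=e^{i(t\tau+x\cdot\xi)}(p_2+p_1+p_0)v$) is $p_2+p_1+p_0$, $p_j$ homogeneous of degree $j$ in $(\tau,\xi)$, with $p_2=(\rho\tau^2-(H\cdot\xi)^2)\operatorname{Id}_3-(\gamma p+|H|^2)\xi\otimes\xi+(H\cdot\xi)(\xi\otimes H+H\otimes\xi)$. The subprincipal symbol is $p^s=p_1-\frac1{2i}\sum_j\partial_{x_j}\partial_{\xi_j}p_2$. Let $q_1=\rho\tau^2-(H\cdot\xi)^2$, $q_2=\rho(\tau^2-c_s^2)$, $q_3=\rho(\tau^2-c_f^2)$ with $c_{f,s}^2(x,\xi)=\tfrac12\big((c^2+h^2)|\xi|^2\pm\sqrt{(c^2-h^2)^2|\xi|^4+4b^2c^2|\xi|^2}\big)$,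 $h^2=|H|^2/\rho$, $b^2=|\xi\times H|^2/\rho$; $\operatorname{Char}P=\{q_1=0\}\cup\{q_2=0\}\cup\{q_3=0\}$. Let $w^2=|H|^2\xi\otimes\xi+|\xi|^2H\otimes H-(H\cdot\xi)(H\otimes\xi+\xi\otimes H)$, $\pi_1=\operatorname{Id}_3+\frac{w^2}{(H\cdot\xi)^2-|H|^2|\xi|^2}$, $\pi_2=\frac{1}{\rho c_s^2-\rho c_f^2}\Big((\gamma p+|H|^2)\xi\otimes\xi-(H\cdot\xi)(\xi\otimes H+H\otimes\xi)+\frac{(H\cdot\xi)^2w^2}{\rho c_s^2-(H\cdot\xi)^2}\Big)$, $\pi_3=\frac{1}{\rho c_f^2-\rho c_s^2}\Big((\gamma p+|H|^2)\xi\otimes\xi-(H\cdot\xi)(\xi\otimes H+H\otimes\xi)+\frac{(H\cdot\xi)^2w^2}{\rho c_f^2-(H\cdot\xi)^2}\Big)$. With $\Gamma_1,\Gamma_2,\Gamma_3$ pairwise disjoint conic neighborhoods of $\{q_1=0\},\{q_2=0\},\{q_3=0\}$, on $\Gamma_j$ set $\pi=\pi_j$ and $\tilde p_2=\pi_j+\sum_{k\ne j}\frac{q_j}{q_k}\pi_k$ (so $\tilde p_2p_2=q_j\operatorname{Id}_3$ there). *)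

From HB Require Import structures.
From mathcomp Require Import all_boot all_order all_algebra.
From mathcomp Require Import all_classical all_reals all_analysis.
From mathcomp Require Import complex.
Unset Printing Implicit Defensive.
Import Order.TTheory GRing.Theory Num.Theory.
Import numFieldNormedType.Exports.
Local Open Scope ring_scope.

Section MHD.
Context {R : realType}.

(** Points of R^3 and vectors are row vectors 'rV[R]_3; matrices 'M[R]_3
    act on column vectors. *)
Notation V3 := 'rV[R]_3.

Definition i0 : 'I_3 := @Ordinal 3 0 isT.
Definition i1 : 'I_3 := @Ordinal 3 1 isT.
Definition i2 : 'I_3 := @Ordinal 3 2 isT.

Definition ebas (j : 'I_3) : V3 := delta_mx 0 j.

Definition cmp (u : V3) (i : 'I_3) : R := u 0 i.

Definition dot (u v : V3) : R := \sum_i cmp u i * cmp v i.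
Definition sqn (u : V3) : R := dot u u.

Definition cross (u v : V3) : V3 :=
  \row_k (if k == i0 then cmp u i1 * cmp v i2 - cmp u i2 * cmp v i1
          else if k == i1 then cmp u i2 * cmp v i0 - cmp u i0 * cmp v i2
          else cmp u i0 * cmp v i1 - cmp u i1 * cmp v i0).

Definition outer (a b : V3) : 'M[R]_3 := a^T *m b.

Definition dpart (j : 'I_3) (f : V3 -> R) : V3 -> R :=
  fun x => derive f x (ebas j).

Definition iter_part (s : seq 'I_3) (f : V3 -> R) : V3 -> R :=
  foldr dpart f s.

Definition smooth (f : V3 -> R) : Prop :=
  forall (s : seq 'I_3) (x : V3), differentiable (iter_part s f) x.
Definition smoothV (F : V3 -> V3) : Prop :=
  forall i, smooth (fun x => cmp (F x) i).

Definition grad (f : V3 -> R) : V3 -> V3 := fun x => \row_j dpart j f x.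
Definition divg (F : V3 -> V3) : V3 -> R :=
  fun x => \sum_j dpart j (fun y => cmp (F y) j) x.
Definition curl (F : V3 -> V3) : V3 -> V3 := fun x =>
  let d j i := dpart j (fun y => cmp (F y) i) x in
  \row_k (if k == i0 then d i1 i2 - d i2 i1
          else if k == i1 then d i2 i0 - d i0 i2
          else d i0 i1 - d i1 i0).

Definition Pop (rho p : V3 -> R) (H : V3 -> V3) (gamma : R)
  (beta : R -> V3 -> V3) : R -> V3 -> V3 := fun t x =>
  - rho x *: derive1 (fun s => derive1 (fun r => beta r x) s) t
  + gamma *: grad (fun y => p y * divg (beta t) y) x
  + grad (fun y => dot (beta t y) (grad p y)) x
  + cross (curl (curl (fun y => cross (beta t y) (H y))) x) (H x)
  + cross (curl H x) (curl (fun y => cross (beta t y) (H y)) x).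

(** Coefficients of the first-order part of P = sum_alpha a_alpha d^alpha
    at (t0,x0): a_alpha(t0,x0) v = P((z - z0)^alpha v)(t0,x0) for |alpha| = 1.
    Column k of the matrix is P applied to the field (z-z0)_alpha e_k. *)
Definition coef_t rho p H gamma (t0 : R) (x0 : V3) : 'M[R]_3 :=
  \matrix_(i, k) cmp (Pop rho p H gamma
        (fun t _ => (t - t0) *: ebas k) t0 x0) i.
Definition coef_x rho p H gamma (j : 'I_3) (t0 : R) (x0 : V3) : 'M[R]_3 :=
  \matrix_(i, k) cmp (Pop rho p H gamma
        (fun _ x => (cmp x j - cmp x0 j) *: ebas k) t0 x0) i.

Definition cplx_mx (M : 'M[R]_3) : 'M[R[i]]_3 := map_mx (fun a => a%:C%C) M.

Definition p1 rho p H gamma (t : R) (x : V3) (tau : R) (xi : V3)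
  : 'M[R[i]]_3 :=
  'i%C *: cplx_mx (tau *: coef_t rho p H gamma t x
                 + \sum_j cmp xi j *: coef_x rho p H gamma j t x).

Definition p2 (rho p : V3 -> R) (H : V3 -> V3) (gamma : R)
  (x : V3) (tau : R) (xi : V3) : 'M[R]_3 :=
  (rho x * tau ^+ 2 - (dot (H x) xi) ^+ 2) *: 1%:M
  - (gamma * p x + sqn (H x)) *: outer xi xi
  + dot (H x) xi *: (outer xi (H x) + outer (H x) xi).

Definition d2p2 rho p H gamma (x : V3) (tau : R) (xi : V3) : 'M[R]_3 :=
  \matrix_(a, b) \sum_j
     dpart j (fun y => dpart j (fun z => p2 rho p H gamma y tau z a b) xi) x.

Definition psub rho p H gamma (t : R) (x : V3) (tau : R) (xi : V3)
  : 'M[R[i]]_3 :=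
  p1 rho p H gamma t x tau xi
  - (2%:R * 'i%C)^-1 *: cplx_mx (d2p2 rho p H gamma x tau xi).

Definition c2 (rho p : V3 -> R) (gamma : R) x := gamma * p x / rho x.
Definition h2 (rho : V3 -> R) (H : V3 -> V3) x := sqn (H x) / rho x.
Definition b2 (rho : V3 -> R) (H : V3 -> V3) x xi := sqn (cross xi (H x)) / rho x.
Definition disc rho p H gamma x xi :=
  Num.sqrt ((c2 rho p gamma x - h2 rho H x) ^+ 2 * sqn xi ^+ 2
            + 4%:R * b2 rho H x xi * c2 rho p gamma x * sqn xi).
Definition cf2 rho p H gamma x xi :=
  ((c2 rho p gamma x + h2 rho H x) * sqn xi + disc rho p H gamma x xi) / 2%:R.
Definition cs2 rho p H gamma x xi :=
  ((c2 rho p gamma x + h2 rho H x) * sqn xi - disc rho p H gamma x xi) / 2%:R.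

(** q_1, q_2, q_3, indexed by 'I_3 (index 0,1,2 stand for 1,2,3) *)
Definition qq rho p H gamma (j : 'I_3) x (tau : R) xi : R :=
  if j == i0 then rho x * tau ^+ 2 - (dot (H x) xi) ^+ 2
  else if j == i1 then rho x * (tau ^+ 2 - cs2 rho p H gamma x xi)
  else rho x * (tau ^+ 2 - cf2 rho p H gamma x xi).

Definition w2 (H : V3 -> V3) x xi : 'M[R]_3 :=
  sqn (H x) *: outer xi xi + sqn xi *: outer (H x) (H x)
  - dot (H x) xi *: (outer (H x) xi + outer xi (H x)).

Definition pi_aux rho p H gamma x xi (c : R) (c' : R) : 'M[R]_3 :=
  (rho x * c - rho x * c')^-1 *:
   ((gamma * p x + sqn (H x)) *: outer xi xi
    - dot (H x) xi *: (outer xi (H x) + outer (H x) xi)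
    + ((dot (H x) xi) ^+ 2 / (rho x * c - (dot (H x) xi) ^+ 2)) *: w2 H x xi).

Definition piproj rho p H gamma (j : 'I_3) x xi : 'M[R]_3 :=
  if j == i0 then
    1%:M + ((dot (H x) xi) ^+ 2 - sqn (H x) * sqn xi)^-1 *: w2 H x xi
  else if j == i1 then
    pi_aux rho p H gamma x xi (cs2 rho p H gamma x xi) (cf2 rho p H gamma x xi)
  else
    pi_aux rho p H gamma x xi (cf2 rho p H gamma x xi) (cs2 rho p H gamma x xi).

Definition tp2 rho p H gamma (j : 'I_3) x tau xi : 'M[R]_3 :=
  piproj rho p H gamma j x xi
  + \sum_(k | k != j) (qq rho p H gamma j x tau xi / qq rho p H gamma k x tau xi)
                        *: piproj rho p H gamma k x xi.

End MHD.

(* On the characteristic variety [q_j = 0] every term of [tp2] but [pi_j] vanishes, so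
   the claim is [pi_j p^s pi_j = 0].  The subprincipal symbol is [i] times a real matrix
   [S], and [S] is antisymmetric: once [grad p] is eliminated with the equilibrium
   relation, the symmetric part of the first-order symbol of [P] is exactly
   [-1/2 sum_j d_{x_j} d_{xi_j} p_2].  Each [pi_j] is a symmetric matrix whose 2x2 minors
   vanish: [pi_1] is the orthogonal projector onto [xi x H], and [pi_2], [pi_3] are
   quadratic forms in [xi], [H] of zero determinant because [rho c_s^2], [rho c_f^2] are
   the roots of [X^2 - (gamma p + |H|^2) |xi|^2 X + gamma p (H.xi)^2 |xi|^2].  For such
   [P = +-w w^T] and antisymmetric [S], [P S P = +-w (w^T S w) w^T = 0]. *)

From HB Require Import structures.
From mathcomp Require Import all_boot all_order all_algebra.
From mathcomp Require Import all_classical all_reals all_analysis.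
From mathcomp Require Import complex.
From mathcomp Require Import ring.
Import Order.TTheory GRing.Theory Num.Theory.
Import numFieldNormedType.Exports.
Local Open Scope ring_scope.

Lemma ord3P (i : 'I_3) : [\/ i = i0, i = i1 | i = i2].
Proof.
by case: i => [[|[|[|//]]] ?]; [apply: Or31 | apply: Or32 | apply: Or33]; apply: val_inj.
Qed.

Lemma ord3E :
  ((i0 == i1) = false) * ((i0 == i2) = false) * ((i1 == i0) = false) *
  ((i1 == i2) = false) * ((i2 == i0) = false) * ((i2 == i1) = false) *
  (ordS i0 = i1) * (ordS i1 = i2) * (ordS i2 = i0) *
  (ord_pred i0 = i2) * (ord_pred i1 = i0) * (ord_pred i2 = i1).
Proof. by do !split; apply: val_inj. Qed.

Lemma sum3 {V : nmodType} (F : 'I_3 -> V) : \sum_i F i = F i0 + F i1 + F i2.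
Proof.
rewrite !big_ord_recl big_ord0 addr0 addrA.
by congr (F _ + F _ + F _); apply: val_inj.
Qed.

Section PartialDerivatives.
Context {R : realType}.
Notation V3 := 'rV[R]_3.
Implicit Types (f g : V3 -> R) (y : V3).

Lemma dpartD a f g y : differentiable f y -> differentiable g y ->
  dpart a (fun z => f z + g z) y = dpart a f y + dpart a g y.
Proof. by move=> df dg; apply: deriveD; apply: diff_derivable. Qed.

Lemma dpartN a f y : differentiable f y ->
  dpart a (fun z => - f z) y = - dpart a f y.
Proof. by move=> df; apply: deriveN; apply: diff_derivable. Qed.

Lemma dpartB a f g y : differentiable f y -> differentiable g y ->
  dpart a (fun z => f z - g z) y = dpart a f y - dpart a g y.
Proof. by move=> df dg; apply: deriveB; apply: diff_derivable. Qed.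

Lemma dpartM a f g y : differentiable f y -> differentiable g y ->
  dpart a (fun z => f z * g z) y = dpart a f y * g y + f y * dpart a g y.
Proof.
move=> df dg; rewrite /dpart (@deriveM _ _ f g y (ebas a)); try exact: diff_derivable.
by rewrite /GRing.scale /= addrC mulrC [_ * derive g _ _]mulrC.
Qed.

Lemma dpart_cst a (c : R) y : dpart a (fun _ => c) y = 0.
Proof. exact: (derive_cst c). Qed.

Lemma dpart_coord a l y : dpart a (fun z => cmp z l) y = (a == l)%:R.
Proof.
have @L : {linear V3 -> R}.
  by exists (fun N : V3 => N 0 l); do 2![eexists]; do ?[constructor];
     rewrite ?mxE// => ? *; rewrite ?mxE//; move=> ?; rewrite !mxE.
rewrite /dpart /cmp (_ : (fun _ => _) = L) //.
rewrite deriveE; last exact/linear_differentiable/coord_continuous.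
rewrite diff_lin; last exact: coord_continuous.
by rewrite /= /ebas mxE /= eq_sym.
Qed.

Lemma iter_part_cons a s f : iter_part (a :: s) f = dpart a (iter_part s f).
Proof. by []. Qed.

Lemma smooth_differentiable f y : smooth f -> differentiable f y.
Proof. by move=> /(_ [::] y). Qed.

Lemma smooth_dpart a {f} : smooth f -> smooth (dpart a f).
Proof. by move=> sf s y; have := sf (s ++ [:: a]) y; rewrite /iter_part foldr_cat. Qed.

Lemma smooth_ext {f} g : smooth f -> (forall z, f z = g z) -> smooth g.
Proof. by move=> + /funext <-. Qed.

Lemma iter_partD s f g : smooth f -> smooth g ->
  iter_part s (fun z => f z + g z) = fun z => iter_part s f z + iter_part s g z.
Proof.
move=> sf sg; elim: s => [//|a s IH]; apply/funext => y.
by rewrite !iter_part_cons IH dpartD.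
Qed.

Lemma iter_partZ s (c : R) f : smooth f ->
  iter_part s (fun z => c * f z) = fun z => c * iter_part s f z.
Proof.
move=> sf; elim: s => [//|a s IH]; apply/funext => y.
by rewrite !iter_part_cons IH dpartM ?dpart_cst ?mul0r ?add0r.
Qed.

Lemma smoothD {f g} : smooth f -> smooth g -> smooth (fun z => f z + g z).
Proof.
move=> sf sg s y; rewrite iter_partD //.
by apply: differentiableD; [exact: sf | exact: sg].
Qed.

Lemma smoothZ (c : R) {f} : smooth f -> smooth (fun z => c * f z).
Proof.
move=> sf s y; rewrite iter_partZ //.
by apply: differentiableM; [exact: differentiable_cst | exact: sf].
Qed.

Lemma smoothB {f g} : smooth f -> smooth g -> smooth (fun z => f z - g z).
Proof.
move=> sf sg; apply: (smooth_ext _ (smoothD sf (smoothZ (-1) sg))) => z.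
by rewrite mulN1r.
Qed.
End PartialDerivatives.

Section VectorCalculus.
Context {R : realType}.
Notation V3 := 'rV[R]_3.
Implicit Types (f g : V3 -> R) (F G : V3 -> V3) (u v w y : V3).

Lemma bool_natr : ((true%:R : R) = 1) * ((false%:R : R) = 0).
Proof. by []. Qed.

Lemma vecP u v : (forall n, cmp u n = cmp v n) -> u = v.
Proof. by move=> e; apply/rowP => n; exact: e. Qed.

Lemma cmp_zero n : cmp (0 : V3) n = 0.
Proof. by rewrite /cmp mxE. Qed.

Lemma cmpD u v n : cmp (u + v) n = cmp u n + cmp v n.
Proof. by rewrite /cmp mxE. Qed.

Lemma cmpN u n : cmp (- u) n = - cmp u n.
Proof. by rewrite /cmp mxE. Qed.

Lemma cmpB u v n : cmp (u - v) n = cmp u n - cmp v n.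
Proof. by rewrite cmpD cmpN. Qed.

Lemma cmpZ (c : R) u n : cmp (c *: u) n = c * cmp u n.
Proof. by rewrite /cmp mxE. Qed.

Lemma cmp_sum (W : 'I_3 -> V3) n : cmp (\sum_a W a) n = \sum_a cmp (W a) n.
Proof. by rewrite /cmp summxE. Qed.

Lemma cmp_ebas k n : cmp (ebas k : V3) n = (k == n)%:R.
Proof. by rewrite /cmp /ebas mxE eqxx /= eq_sym. Qed.

Lemma cmp_grad f y n : cmp (grad f y) n = dpart n f y.
Proof. by rewrite /cmp mxE. Qed.

Lemma dot3 u v : dot u v = cmp u i0 * cmp v i0 + cmp u i1 * cmp v i1 + cmp u i2 * cmp v i2.
Proof. by rewrite /dot sum3. Qed.

Lemma differentiable_dot F G y :
  (forall n, differentiable (fun z => cmp (F z) n) y) ->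
  (forall n, differentiable (fun z => cmp (G z) n) y) ->
  differentiable (fun z => dot (F z) (G z)) y.
Proof.
move=> dF dG; rewrite (_ : (fun z => _) = fun z =>
  cmp (F z) i0 * cmp (G z) i0 + cmp (F z) i1 * cmp (G z) i1 + cmp (F z) i2 * cmp (G z) i2).
  by apply: differentiableD; [apply: differentiableD|]; apply: differentiableM.
by apply/funext => z; rewrite dot3.
Qed.

Lemma dotC u v : dot u v = dot v u.
Proof. by rewrite !dot3; ring. Qed.

Lemma crossE u v k : cmp (cross u v) k =
  cmp u (ordS k) * cmp v (ord_pred k) - cmp u (ord_pred k) * cmp v (ordS k).
Proof. by rewrite /cross {1}/cmp mxE; case: (ord3P k) => ->; rewrite !ord3E. Qed.

Lemma outerE u v a b : outer u v a b = cmp u a * cmp v b.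
Proof. by rewrite /outer mxE big_ord1 !mxE. Qed.

Lemma dot0l v : dot 0 v = 0.
Proof. by rewrite dot3 !cmp_zero !mul0r !addr0. Qed.

Lemma dot0r u : dot u 0 = 0.
Proof. by rewrite dotC dot0l. Qed.

Lemma mxDE (A B : 'M[R]_3) a b : (A + B) a b = A a b + B a b.
Proof. by rewrite mxE. Qed.

Lemma mxNE (A : 'M[R]_3) a b : (- A) a b = - A a b.
Proof. by rewrite mxE. Qed.

Lemma mxZE (c : R) (A : 'M[R]_3) a b : (c *: A) a b = c * A a b.
Proof. by rewrite mxE. Qed.

Lemma mx1E a b : (1%:M : 'M[R]_3) a b = (a == b)%:R.
Proof. by rewrite mxE. Qed.

Definition mx3E := (mxDE, mxNE, mxZE, mx1E, outerE).

Lemma dotZl (c : R) u v : dot (c *: u) v = c * dot u v.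
Proof. by rewrite !dot3 !cmpZ; ring. Qed.

Lemma dot_ebasl k v : dot (ebas k) v = cmp v k.
Proof.
by rewrite dot3 !cmp_ebas; case: (ord3P k) => ->; rewrite !ord3E !eqxx !bool_natr; ring.
Qed.

Lemma dot_ebasr u k : dot u (ebas k) = cmp u k.
Proof. by rewrite dotC dot_ebasl. Qed.

Lemma cross0l v : cross 0 v = 0.
Proof. by apply: vecP => k; rewrite crossE !cmp_zero !mul0r subrr. Qed.

Lemma cross0r u : cross u 0 = 0.
Proof. by apply: vecP => k; rewrite crossE !cmp_zero !mulr0 subrr. Qed.

Lemma crossZl (c : R) u v : cross (c *: u) v = c *: cross u v.
Proof. by apply: vecP => k; rewrite cmpZ !crossE !cmpZ; ring. Qed.

Lemma crossZr (c : R) u v : cross u (c *: v) = c *: cross u v.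
Proof. by apply: vecP => k; rewrite cmpZ !crossE !cmpZ; ring. Qed.

Lemma crossDr u v w : cross u (v + w) = cross u v + cross u w.
Proof. by apply: vecP => k; rewrite cmpD !crossE !cmpD; ring. Qed.

Lemma crossBr u v w : cross u (v - w) = cross u v - cross u w.
Proof. by apply: vecP => k; rewrite cmpB !crossE !cmpB; ring. Qed.

Lemma crossNl u v : cross (- u) v = - cross u v.
Proof. by apply: vecP => k; rewrite cmpN !crossE !cmpN; ring. Qed.

Lemma crossDl u v w : cross (u + v) w = cross u w + cross v w.
Proof. by apply: vecP => k; rewrite cmpD !crossE !cmpD; ring. Qed.

Lemma crossBl u v w : cross (u - v) w = cross u w - cross v w.
Proof. by rewrite crossDl crossNl. Qed.

Lemma cross_suml (W : 'I_3 -> V3) w : cross (\sum_a W a) w = \sum_a cross (W a) w.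
Proof. by rewrite !sum3 !crossDl. Qed.

Lemma cross_crossl u v w : cross (cross u v) w = dot u w *: v - dot v w *: u.
Proof.
apply: vecP => k; rewrite cmpB !cmpZ !crossE !dot3.
by case: (ord3P k) => ->; rewrite !ord3E; ring.
Qed.

Lemma cross_cross u v w : cross u (cross v w) = dot u w *: v - dot u v *: w.
Proof.
apply: vecP => k; rewrite cmpB !cmpZ !crossE !dot3.
by case: (ord3P k) => ->; rewrite !ord3E; ring.
Qed.

Lemma sum_cmp_ebas_scale j (W : 'I_3 -> V3) : \sum_a cmp (ebas j) a *: W a = W j.
Proof.
rewrite sum3 !cmp_ebas.
by case: (ord3P j) => ->; rewrite !ord3E !eqxx !bool_natr !scale0r !scale1r ?addr0 ?add0r.
Qed.

Lemma sum_cross_ebas_cross v (W : 'I_3 -> V3) :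
  \sum_a cross (ebas a) (cross v (W a)) = (\sum_a cmp (W a) a) *: v - \sum_a cmp v a *: W a.
Proof.
under eq_bigr => a _ do rewrite cross_cross dot_ebasl dot_ebasl.
by rewrite sumrB scaler_suml.
Qed.

Lemma sum_cmp_cross w (D : 'I_3 -> V3) :
  \sum_a cmp (cross w (D a)) a = - dot w (\sum_a cross (ebas a) (D a)).
Proof.
by rewrite !sum3 !crossE dot3 !cmpD !crossE !cmp_ebas !ord3E !eqxx !bool_natr; ring.
Qed.

End VectorCalculus.

Ltac differentiable_tac := repeat first
  [ apply: differentiableD | apply: differentiableB | apply: differentiableM
  | apply: differentiableN | apply: differentiable_cst | apply: differentiable_coord
  | apply: differentiable_dot | solve [auto] | move=> ? ].

Section VectorFields.
Context {R : realType}.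
Notation V3 := 'rV[R]_3.
Implicit Types (f g : V3 -> R) (F G : V3 -> V3) (u v w y : V3).

(* The dedicated key stops unification from unfolding [dpartv] into derivatives
   whenever a component lemma is tried against it. *)
Fact dpartv_key : unit. Proof. by []. Qed.
Definition dpartv a F y : V3 :=
  \matrix[dpartv_key]_(i, n) dpart a (fun z => cmp (F z) n) y.

Lemma cmp_dpartv a F y n : cmp (dpartv a F y) n = dpart a (fun z => cmp (F z) n) y.
Proof. by rewrite /cmp mxE. Qed.

Lemma curlE F y k : cmp (curl F y) k =
  cmp (dpartv (ordS k) F y) (ord_pred k) - cmp (dpartv (ord_pred k) F y) (ordS k).
Proof.
by rewrite /curl {1}/cmp mxE !cmp_dpartv; case: (ord3P k) => ->; rewrite !ord3E.
Qed.

Lemma cmp_sum_cross_ebas (D : 'I_3 -> V3) k :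
  cmp (\sum_a cross (ebas a) (D a)) k =
  cmp (D (ordS k)) (ord_pred k) - cmp (D (ord_pred k)) (ordS k).
Proof.
rewrite sum3 !cmpD !crossE !cmp_ebas.
by case: (ord3P k) => ->; rewrite !ord3E !eqxx !bool_natr; ring.
Qed.

Lemma curl_sumE F y : curl F y = \sum_a cross (ebas a) (dpartv a F y).
Proof. by apply: vecP => k; rewrite curlE cmp_sum_cross_ebas. Qed.

Lemma dpart_ext a y f g : (forall z, f z = g z) -> dpart a f y = dpart a g y.
Proof. by move=> /funext ->. Qed.

Lemma grad_sumE f y : grad f y = \sum_a dpart a f y *: ebas a.
Proof.
apply: vecP => n; rewrite cmp_grad cmp_sum (bigD1 n) //= big1 => [|a an].
  by rewrite cmpZ cmp_ebas eqxx mulr1 addr0.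
by rewrite cmpZ cmp_ebas (negbTE an) mulr0.
Qed.

Section AtPoint.
Variables (y : V3) (F G : V3 -> V3).
Hypotheses (dF : forall n, differentiable (fun z => cmp (F z) n) y)
           (dG : forall n, differentiable (fun z => cmp (G z) n) y).

Lemma dpartvD a : dpartv a (fun z => F z + G z) y = dpartv a F y + dpartv a G y.
Proof.
apply: vecP => n; rewrite cmpD !cmp_dpartv.
by under dpart_ext => z do rewrite cmpD; rewrite dpartD.
Qed.

Lemma dpartv_scale a f : differentiable f y ->
  dpartv a (fun z => f z *: F z) y = dpart a f y *: F y + f y *: dpartv a F y.
Proof.
move=> df; apply: vecP => n; rewrite cmpD !cmpZ !cmp_dpartv.
by under dpart_ext => z do rewrite cmpZ; rewrite dpartM.
Qed.

Lemma dpartv_cross_cst a c : dpartv a (fun z => cross c (F z)) y = cross c (dpartv a F y).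
Proof.
apply: vecP => n; rewrite crossE !cmp_dpartv.
under dpart_ext => z do rewrite crossE.
by rewrite dpartB ?dpartM ?dpart_cst ?mul0r ?add0r //; differentiable_tac.
Qed.

Lemma dpart_dot a : dpart a (fun z => dot (F z) (G z)) y =
  dot (dpartv a F y) (G y) + dot (F y) (dpartv a G y).
Proof.
under dpart_ext => z do rewrite dot3.
rewrite !dot3 !cmp_dpartv !dpartD ?dpartM; try by differentiable_tac.
ring.
Qed.

Lemma divg_cross_cst c : divg (fun z => cross c (F z)) y = - dot c (curl F y).
Proof.
rewrite /divg curl_sumE -sum_cmp_cross; apply: eq_bigr => a _.
by rewrite -cmp_dpartv dpartv_cross_cst.
Qed.

Lemma curl_cross_cst c :
  curl (fun z => cross c (F z)) y = divg F y *: c - \sum_a cmp c a *: dpartv a F y.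
Proof.
rewrite curl_sumE; under eq_bigr => a _ do rewrite dpartv_cross_cst.
rewrite sum_cross_ebas_cross; congr (_ *: _ - _).
by apply: eq_bigr => a _; rewrite cmp_dpartv.
Qed.

Lemma curlD : curl (fun z => F z + G z) y = curl F y + curl G y.
Proof.
by rewrite !curl_sumE -big_split; apply: eq_bigr => a _; rewrite dpartvD crossDr.
Qed.

Lemma curl_scale f : differentiable f y ->
  curl (fun z => f z *: F z) y = cross (grad f y) (F y) + f y *: curl F y.
Proof.
move=> df; rewrite !curl_sumE.
under eq_bigr => a _ do rewrite dpartv_scale // crossDr !crossZr.
rewrite big_split /= -scaler_sumr grad_sumE cross_suml.
by congr (_ + _); apply: eq_bigr => a _; rewrite crossZl.
Qed.

End AtPoint.

Lemma dpartv_cst a c y : dpartv a (fun _ => c) y = 0.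
Proof. by apply: vecP => n; rewrite cmp_dpartv dpart_cst cmp_zero. Qed.

Lemma dpartv_id a y : dpartv a id y = ebas a.
Proof. by apply: vecP => n; rewrite cmp_dpartv cmp_ebas; exact: dpart_coord. Qed.

Lemma grad_cst (c : R) y : grad (fun _ => c) y = 0.
Proof. by apply: vecP => n; rewrite cmp_grad dpart_cst cmp_zero. Qed.

Lemma divg_cst c y : divg (fun _ => c) y = 0.
Proof. by rewrite /divg big1 // => i _; rewrite dpart_cst. Qed.

Lemma curl_cst c y : curl (fun _ => c) y = 0.
Proof. by apply: vecP => k; rewrite curlE !dpartv_cst !cmp_zero subrr. Qed.

Lemma differentiable_cmp_scale f F y n : differentiable f y ->
  differentiable (fun z => cmp (F z) n) y -> differentiable (fun z => cmp (f z *: F z) n) y.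
Proof.
move=> df dF; rewrite (_ : (fun z => _) = fun z => f z * cmp (F z) n).
  exact: differentiableM.
by apply/funext => z; rewrite cmpZ.
Qed.

Lemma grad_mul f g y : differentiable f y -> differentiable g y ->
  grad (fun z => f z * g z) y = g y *: grad f y + f y *: grad g y.
Proof.
by move=> df dg; apply: vecP => n; rewrite cmpD !cmpZ !cmp_grad dpartM //; ring.
Qed.

Lemma grad_coord_sub j (c : R) y : grad (fun z => cmp z j - c) y = ebas j.
Proof.
apply: vecP => n; rewrite cmp_grad cmp_ebas dpartB; last 2 first.
- exact: differentiable_coord.
- exact: differentiable_cst.
by rewrite dpart_coord dpart_cst subr0 eq_sym.
Qed.

Lemma divg_scale_cst f c y : differentiable f y ->
  divg (fun z => f z *: c) y = dot (grad f y) c.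
Proof.
move=> df; rewrite /divg /dot; apply: eq_bigr => i _.
under dpart_ext => z do rewrite cmpZ.
by rewrite dpartM ?dpart_cst ?mulr0 ?addr0 ?cmp_grad //; exact: differentiable_cst.
Qed.

Lemma smoothV_differentiable {F} n y : smoothV F -> differentiable (fun z => cmp (F z) n) y.
Proof. by move=> /(_ n); apply: smooth_differentiable. Qed.

Lemma smoothV_cross_cst c {F} : smoothV F -> smoothV (fun z => cross c (F z)).
Proof.
move=> sF n; apply: (smooth_ext _ (smoothB
  (smoothZ (cmp c (ordS n)) (sF (ord_pred n)))
  (smoothZ (cmp c (ord_pred n)) (sF (ordS n))))) => z.
by rewrite crossE.
Qed.

Lemma smoothV_curl {F} : smoothV F -> smoothV (curl F).
Proof.
move=> sF n; apply: (smooth_ext _ (smoothB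
  (smooth_dpart (ordS n) (sF (ord_pred n)))
  (smooth_dpart (ord_pred n) (sF (ordS n))))) => z.
by rewrite curlE !cmp_dpartv.
Qed.

End VectorFields.

Section FirstOrderCoefficients.
Context {R : realType}.
Notation V3 := 'rV[R]_3.
Variables (rho p : V3 -> R) (H : V3 -> V3) (gamma : R).

Lemma derive1_affine (t0 s : R) (e : V3) : derive1 (fun r => (r - t0) *: e) s = e.
Proof.
have hk : differentiable (fun r : R => r - t0) s.
  by apply: differentiableB => //; exact: differentiable_cst.
rewrite derive1E deriveE; last exact: differentiableZl.
rewrite diffZl //= -deriveE // deriveB //.
by rewrite derive_id (derive_cst t0) subr0 scale1r.
Qed.

Lemma coef_t0 t0 x0 : coef_t rho p H gamma t0 x0 = 0.
Proof.
apply/matrixP => i k; rewrite !mxE /Pop subrr scale0r.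
under eq_fun => s do rewrite derive1_affine.
rewrite (derive1_cst (ebas k)) scaler0 add0r.
have -> : (fun y => p y * divg (fun=> 0) y) = fun=> 0.
  by apply/funext => y; rewrite divg_cst mulr0.
have -> : (fun y => dot 0 (grad p y)) = fun=> 0 by apply/funext => y; exact: dot0l.
have -> : (fun y => cross 0 (H y)) = fun=> 0 by apply/funext => y; exact: cross0l.
have -> : curl (fun=> 0 : V3) = fun=> 0 by apply/funext => y; exact: curl_cst.
by rewrite !grad_cst curl_cst cross0l cross0r !scaler0 !addr0 cmp_zero.
Qed.

Hypotheses (sp : smooth p) (sH : smoothV H).
Variable x : V3.

Lemma Pop_coord_shift j k t :
  Pop rho p H gamma (fun _ y => (cmp y j - cmp x j) *: ebas k) t x =
  (gamma * (j == k)%:R) *: grad p x + dpart k p x *: ebas j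
  + cross (curl (fun y => cross (ebas j) (cross (ebas k) (H y))) x
           + cross (ebas j) (curl (fun y => cross (ebas k) (H y)) x)) (H x)
  + cross (curl H x) (cross (ebas j) (cross (ebas k) (H x))).
Proof.
have dl y : differentiable (fun z : V3 => cmp z j - cmp x j) y.
  by apply: differentiableB; [exact: differentiable_coord | exact: differentiable_cst].
have gl y : grad (fun z : V3 => cmp z j - cmp x j) y = ebas j by exact: grad_coord_sub.
have sG := smoothV_cross_cst (ebas k) sH.
rewrite /Pop subrr scale0r.
under eq_fun => s do rewrite (derive1_cst (0 : V3)).
rewrite (derive1_cst (0 : V3)) scaler0 add0r.
have -> : (fun y => p y * divg (fun z => (cmp z j - cmp x j) *: ebas k) y) =
          fun y => p y * (j == k)%:R.
  by apply/funext => y; rewrite divg_scale_cst // gl dot_ebasl cmp_ebas eq_sym.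
have -> : (fun y => dot ((cmp y j - cmp x j) *: ebas k) (grad p y)) =
          fun y => (cmp y j - cmp x j) * dpart k p y.
  by apply/funext => y; rewrite dotZl dot_ebasl cmp_grad.
have -> : (fun y => cross ((cmp y j - cmp x j) *: ebas k) (H y)) =
          fun y => (cmp y j - cmp x j) *: cross (ebas k) (H y).
  by apply/funext => y; rewrite crossZl.
have -> : curl (fun y => (cmp y j - cmp x j) *: cross (ebas k) (H y)) =
          fun y => cross (ebas j) (cross (ebas k) (H y))
                   + (cmp y j - cmp x j) *: curl (fun y => cross (ebas k) (H y)) y.
  by apply/funext => y; rewrite curl_scale ?gl // => n; apply: smoothV_differentiable.
rewrite curlD; last 2 first.
- by move=> n; apply/smoothV_differentiable/smoothV_cross_cst.
- move=> n; apply: differentiable_cmp_scale => //.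
  exact: smoothV_differentiable (smoothV_curl sG).
rewrite curl_scale ?gl; [|by move=> n; apply: smoothV_differentiable (smoothV_curl sG)|exact: dl].
rewrite grad_mul ?grad_cst; [|exact: smooth_differentiable|exact: differentiable_cst].
rewrite grad_mul ?gl; [|by []|exact: smooth_differentiable (smooth_dpart k sp)].
by rewrite subrr !scale0r scaler0 !addr0 scalerA.
Qed.

Lemma coef_xE j t i k : coef_x rho p H gamma j t x i k =
  cmp ((gamma * (j == k)%:R) *: grad p x + cmp (grad p x) k *: ebas j
       - cmp (curl H x) k *: cross (ebas j) (H x)
       - cmp (H x) k *: dpartv j H x + dot (dpartv j H x) (H x) *: ebas k
       + divg H x *: (cmp (H x) j *: ebas k - cmp (H x) k *: ebas j)
       - cmp (H x) j *: dpartv k H x + dot (dpartv k H x) (H x) *: ebas j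
       + cmp (H x) j *: cross (curl H x) (ebas k) - (j == k)%:R *: cross (curl H x) (H x)) i.
Proof.
have dH n : differentiable (fun z => cmp (H z) n) x by exact: smoothV_differentiable.
have dG n : differentiable (fun z => cmp (cross (ebas k) (H z)) n) x.
  exact/smoothV_differentiable/smoothV_cross_cst.
rewrite /coef_x mxE Pop_coord_shift !curl_cross_cst // divg_cross_cst //.
rewrite !sum_cmp_ebas_scale dpartv_cross_cst // [cross (ebas j) (cross _ _)]cross_cross.
rewrite !dot_ebasl cmp_ebas -cmp_grad.
move: (grad p x) (curl H x) (divg H x) (H x) (dpartv j H x) (dpartv k H x) => g c dv h Dj Dk.
rewrite !crossBr !crossZr !(crossDl, crossBl, crossNl, crossZl) !cross_crossl !dot_ebasl.
by rewrite !(cmpD, cmpB, cmpN, cmpZ) [k == j]eq_sym; ring.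
Qed.

End FirstOrderCoefficients.

Ltac dpart_expand := repeat first
  [ rewrite dpartD; [|by differentiable_tac..]
  | rewrite dpartB; [|by differentiable_tac..]
  | rewrite dpartM; [|by differentiable_tac..]
  | rewrite dpartN; [|by differentiable_tac..]
  | rewrite dpart_dot; [|by differentiable_tac..]
  | rewrite dpart_cst | rewrite dpart_coord | rewrite -cmp_dpartv
  | rewrite dpartv_cst | rewrite dpartv_id
  | rewrite dot0l | rewrite dot0r | rewrite dot_ebasr ].

Section PrincipalSymbol.
Context {R : realType}.
Notation V3 := 'rV[R]_3.
Variables (rho p : V3 -> R) (H : V3 -> V3) (gamma : R).

Lemma p2E y tau z a b : p2 rho p H gamma y tau z a b =
  (rho y * tau ^+ 2 - dot (H y) z * dot (H y) z) * (a == b)%:R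
  - (gamma * p y + sqn (H y)) * (cmp z a * cmp z b)
  + dot (H y) z * (cmp z a * cmp (H y) b + cmp (H y) a * cmp z b).
Proof. by rewrite /p2 !mxE !big_ord1 !mxE expr2. Qed.

Lemma dpart_xi_p2 j y tau xi a b :
  dpart j (fun z => p2 rho p H gamma y tau z a b) xi =
  - (2 * dot (H y) xi * cmp (H y) j) * (a == b)%:R
  - (gamma * p y + sqn (H y)) * ((j == a)%:R * cmp xi b + cmp xi a * (j == b)%:R)
  + cmp (H y) j * (cmp xi a * cmp (H y) b + cmp (H y) a * cmp xi b)
  + dot (H y) xi * ((j == a)%:R * cmp (H y) b + cmp (H y) a * (j == b)%:R).
Proof.
under dpart_ext => z do rewrite p2E.
by dpart_expand; ring.
Qed.

Hypotheses (sp : smooth p) (sH : smoothV H).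

Lemma d2p2E x tau xi a b : d2p2 rho p H gamma x tau xi a b = \sum_j
  (- (2 * (dot (dpartv j H x) xi * cmp (H x) j + dot (H x) xi * cmp (dpartv j H x) j))
     * (a == b)%:R
   - (gamma * cmp (grad p x) j + 2 * dot (H x) (dpartv j H x))
     * ((j == a)%:R * cmp xi b + cmp xi a * (j == b)%:R)
   + cmp (dpartv j H x) j * (cmp xi a * cmp (H x) b + cmp (H x) a * cmp xi b)
   + cmp (H x) j * (cmp xi a * cmp (dpartv j H x) b + cmp (dpartv j H x) a * cmp xi b)
   + dot (dpartv j H x) xi * ((j == a)%:R * cmp (H x) b + cmp (H x) a * (j == b)%:R)
   + dot (H x) xi * ((j == a)%:R * cmp (dpartv j H x) b + cmp (dpartv j H x) a * (j == b)%:R)).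
Proof.
have dH n y : differentiable (fun z => cmp (H z) n) y by exact: smoothV_differentiable.
have dp y : differentiable p y by exact: smooth_differentiable.
rewrite mxE; apply: eq_bigr => j _.
under dpart_ext => y do rewrite dpart_xi_p2.
by rewrite /sqn; dpart_expand; rewrite cmp_grad !dot3; ring.
Qed.

Lemma d2p2_sym x tau xi a b : d2p2 rho p H gamma x tau xi a b = d2p2 rho p H gamma x tau xi b a.
Proof. by rewrite !d2p2E //; apply: eq_bigr => j _; rewrite [b == a]eq_sym; ring. Qed.

End PrincipalSymbol.

Section Subprincipal.
Context {R : realType}.
Notation V3 := 'rV[R]_3.
Variables (rho p : V3 -> R) (H : V3 -> V3) (gamma : R).

Definition psub_im t x tau xi : 'M[R]_3 :=
  tau *: coef_t rho p H gamma t x + \sum_j cmp xi j *: coef_x rho p H gamma j t x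
  + 2%:R^-1 *: d2p2 rho p H gamma x tau xi.

Lemma psub_imE t x tau xi a b : psub_im t x tau xi a b =
  \sum_j cmp xi j * coef_x rho p H gamma j t x a b + 2%:R^-1 * d2p2 rho p H gamma x tau xi a b.
Proof.
rewrite /psub_im coef_t0 scaler0 add0r mxDE mxZE summxE.
by under eq_bigr => j _ do rewrite mxZE.
Qed.

Hypotheses (sp : smooth p) (sH : smoothV H)
  (equilibrium : forall x, grad p x + cross (H x) (curl H x) = 0).

Lemma psub_im_antisym t x tau xi : (psub_im t x tau xi)^T = - psub_im t x tau xi.
Proof.
have gp : grad p x = - cross (H x) (curl H x).
  by apply/eqP; rewrite -addr_eq0 equilibrium.
have divE : divg H x = \sum_a cmp (dpartv a H x) a.
  by apply: eq_bigr => a _; rewrite cmp_dpartv.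
have [c0 c1 c2] : [/\ cmp (curl H x) i0 = cmp (dpartv i1 H x) i2 - cmp (dpartv i2 H x) i1,
    cmp (curl H x) i1 = cmp (dpartv i2 H x) i0 - cmp (dpartv i0 H x) i2 &
    cmp (curl H x) i2 = cmp (dpartv i0 H x) i1 - cmp (dpartv i1 H x) i0].
  by rewrite !curlE !ord3E.
have half (y : R) : 2%:R^-1 * (y + y) = y.
  by rewrite -mulr2n -(mulr_natl y 2) mulrA mulVf ?mul1r // pnatr_eq0.
apply/matrixP => a b; rewrite mxE mxNE; apply/eqP; rewrite -addr_eq0; apply/eqP.
rewrite !psub_imE addrACA -mulrDr [d2p2 _ _ _ _ _ _ _ b a]d2p2_sym // half d2p2E //.
under eq_bigr => j _ do rewrite coef_xE //.
under [X in _ + X + _ = _]eq_bigr => j _ do rewrite coef_xE //.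
rewrite gp divE; move: c0 c1 c2; move: (curl H x) (H x) => c h c0 c1 c2.
(* An opaque family [D] for the partial derivatives keeps the componentwise
   rewriting below from unfolding them. *)
have [D DE] : {D : 'I_3 -> V3 | forall i, dpartv i H x = D i} by exists (fun i => dpartv i H x).
rewrite !sum3 !DE; rewrite !DE in c0 c1 c2.
rewrite !(cmpD, cmpN, cmpZ, crossE, cmp_ebas) !dot3.
by case: (ord3P a) => ->; case: (ord3P b) => ->;
  rewrite !ord3E ?eqxx ?bool_natr c0 c1 c2; ring.
Qed.

End Subprincipal.

Lemma rank1_mulmx_antisym (T : numDomainType) n (P S : 'M[T]_n) :
  (forall a b c d, P a c * P b d = P a d * P b c) -> S^T = - S -> P *m S *m P^T = 0.
Proof.
move=> minor0 antiS; apply/matrixP => a b; rewrite mxE [RHS]mxE.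
set X := (X in X = 0).
have XE : X = \sum_c \sum_d S c d * (P a c * P b d).
  rewrite /X exchange_big; apply: eq_bigr => d _; rewrite !mxE mulr_suml.
  by apply: eq_bigr => c _; ring.
have XN : X = - X.
  rewrite {1}XE; under eq_bigr => c _ do under eq_bigr => d _ do rewrite minor0.
  rewrite exchange_big XE -sumrN; apply: eq_bigr => c _; rewrite -sumrN.
  apply: eq_bigr => d _.
  by have := congr1 (fun M : 'M[T]_n => M c d) antiS; rewrite !mxE => ->; ring.
have /eqP : X *+ 2 = 0 by rewrite mulr2n {2}XN subrr.
by rewrite mulrn_eq0 => /eqP.
Qed.

Lemma quadratic_sqrt_root (R : rcfType) (B C z : R) : 0 <= B ^+ 2 - 4%:R * C ->
  z = (B + Num.sqrt (B ^+ 2 - 4%:R * C)) / 2%:R \/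
  z = (B - Num.sqrt (B ^+ 2 - 4%:R * C)) / 2%:R ->
  z ^+ 2 - B * z + C = 0.
Proof.
move=> d0 zE; have s2 := sqr_sqrtr d0; move: (Num.sqrt _) s2 zE => s s2 zE.
transitivity ((s ^+ 2 - (B ^+ 2 - 4%:R * C)) / 4%:R); last by rewrite s2 subrr mul0r.
by case: zE => ->; field.
Qed.

Section Projectors.
Context {R : realType}.
Notation V3 := 'rV[R]_3.
Implicit Types (u v w : V3).

Definition form2_mx (al be de : R) u v : 'M[R]_3 :=
  al *: outer u u + be *: (outer u v + outer v u) + de *: outer v v.

Lemma form2_mx_tr al be de u v : (form2_mx al be de u v)^T = form2_mx al be de u v.
Proof. by apply/matrixP => a b; rewrite mxE !mx3E; ring. Qed.

Lemma form2_mx_minor al be de u v a b c d : al * de = be ^+ 2 ->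
  let P := form2_mx al be de u v in P a c * P b d = P a d * P b c.
Proof.
move=> det0 /=; rewrite !mx3E; apply/eqP; rewrite -subr_eq0; apply/eqP.
transitivity ((al * de - be ^+ 2) * (cmp u a * cmp v b - cmp v a * cmp u b)
                                  * (cmp u c * cmp v d - cmp v c * cmp u d)); first ring.
by rewrite det0 subrr !mul0r.
Qed.

Lemma form2_mx_antisym al be de u v (S : 'M[R]_3) : al * de = be ^+ 2 -> S^T = - S ->
  form2_mx al be de u v *m S *m form2_mx al be de u v = 0.
Proof.
move=> det0 antiS; rewrite -[X in _ *m X]form2_mx_tr.
by apply: rank1_mulmx_antisym => // a b c d; apply: form2_mx_minor.
Qed.

Lemma sqn_cross u v : sqn (cross u v) = sqn u * sqn v - dot u v ^+ 2.
Proof. by rewrite /sqn !dot3 !crossE !ord3E; ring. Qed.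

Lemma sqn_ge0 u : 0 <= sqn u.
Proof. by rewrite /sqn dot3 -!expr2 !addr_ge0 ?sqr_ge0. Qed.

Lemma sqn_eq0 u : (sqn u == 0) = (u == 0).
Proof.
apply/idP/idP => [|/eqP ->]; last by rewrite /sqn dot0l.
rewrite /sqn dot3 -!expr2 paddr_eq0 ?addr_ge0 ?sqr_ge0 // paddr_eq0 ?sqr_ge0 //.
rewrite !sqrf_eq0 => /andP [/andP [/eqP u0 /eqP u1] /eqP u2]; apply/eqP/vecP => n.
by rewrite cmp_zero; case: (ord3P n) => ->.
Qed.

Variables (rho p : V3 -> R) (H : V3 -> V3) (gamma : R) (x xi : V3).

Lemma piproj0E : cross xi (H x) != 0 ->
  piproj rho p H gamma i0 x xi =
  (sqn (cross xi (H x)))^-1 *: outer (cross xi (H x)) (cross xi (H x)).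
Proof.
move=> n0; have nn0 : sqn (cross xi (H x)) != 0 by rewrite sqn_eq0.
have D_n : dot (H x) xi ^+ 2 - sqn (H x) * sqn xi = - sqn (cross xi (H x)).
  by rewrite sqn_cross dotC; ring.
have w2_n a b : w2 H x xi a b = sqn (cross xi (H x)) * (a == b)%:R
    - cmp (cross xi (H x)) a * cmp (cross xi (H x)) b.
  rewrite /w2 !mx3E sqn_cross /sqn !dot3 !crossE; move: (H x) => h.
  by case: (ord3P a) => ->; case: (ord3P b) => ->; rewrite ?ord3E ?eqxx ?bool_natr; ring.
apply/matrixP => a b; rewrite /piproj /= mxDE mxZE w2_n mx1E D_n !mx3E.
by field.
Qed.

Lemma tp2_char j tau : qq rho p H gamma j x tau xi = 0 ->
  tp2 rho p H gamma j x tau xi = piproj rho p H gamma j x xi.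
Proof. by move=> q0; rewrite /tp2 q0 big1 ?addr0 // => k _; rewrite mul0r scale0r. Qed.

Hypotheses (rho_pos : 0 < rho x) (c2_pos : 0 < c2 rho p gamma x).

Lemma speed_root c : c = cs2 rho p H gamma x xi \/ c = cf2 rho p H gamma x xi ->
  (rho x * c) ^+ 2 - (gamma * p x + sqn (H x)) * sqn xi * (rho x * c)
  + gamma * p x * sqn xi * dot (H x) xi ^+ 2 = 0.
Proof.
move=> cE; have r0 : rho x != 0 by rewrite gt_eqF.
set B := (c2 rho p gamma x + h2 rho H x) * sqn xi.
set C := c2 rho p gamma x * sqn xi * (dot (H x) xi ^+ 2 / rho x).
have radE : (c2 rho p gamma x - h2 rho H x) ^+ 2 * sqn xi ^+ 2
    + 4%:R * b2 rho H x xi * c2 rho p gamma x * sqn xi = B ^+ 2 - 4%:R * C.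
  by rewrite /B /C /b2 /h2 sqn_cross dotC; field.
have rad0 : 0 <= B ^+ 2 - 4%:R * C.
  rewrite -radE; apply: addr_ge0; first by rewrite mulr_ge0 ?sqr_ge0.
  apply: mulr_ge0; last exact: sqn_ge0.
  apply: mulr_ge0; last exact: ltW.
  by apply: mulr_ge0; rewrite // /b2 divr_ge0 ?sqn_ge0 ?ltW.
have root : c ^+ 2 - B * c + C = 0.
  by apply: quadratic_sqrt_root; rewrite // -radE; case: cE => ->; [right | left].
transitivity (rho x ^+ 2 * (c ^+ 2 - B * c + C)); last by rewrite root mulr0.
by rewrite /B /C /c2 /h2; field.
Qed.

Hypotheses (dot_neq0 : dot xi (H x) != 0) (cross_neq0 : cross xi (H x) != 0).

Lemma speed_gap c : c = cs2 rho p H gamma x xi \/ c = cf2 rho p H gamma x xi ->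
  rho x * c - dot (H x) xi ^+ 2 != 0.
Proof.
move=> cE; apply/negP => /eqP gap0; have := speed_root _ cE.
have -> : rho x * c = dot (H x) xi ^+ 2 by apply/eqP; rewrite -subr_eq0 gap0.
have -> : forall y z : R, y ^+ 2 ^+ 2 - (gamma * p x + z) * sqn xi * y ^+ 2
    + gamma * p x * sqn xi * y ^+ 2 = - (y ^+ 2 * (sqn xi * z - y ^+ 2)) by move=> y z; ring.
rewrite dotC -sqn_cross => /eqP; rewrite oppr_eq0 mulf_eq0 sqrf_eq0 sqn_eq0.
by rewrite (negbTE dot_neq0) (negbTE cross_neq0).
Qed.

Lemma pi_aux_form2 c c' : c = cs2 rho p H gamma x xi \/ c = cf2 rho p H gamma x xi ->
  exists al be de, al * de = be ^+ 2 /\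
    pi_aux rho p H gamma x xi c c' = form2_mx al be de xi (H x).
Proof.
move=> cE; have gap := speed_gap _ cE; have root := speed_root _ cE.
set k := (rho x * c - rho x * c')^-1.
set m := dot (H x) xi ^+ 2 / (rho x * c - dot (H x) xi ^+ 2).
set A := gamma * p x + sqn (H x).
exists (k * (A + m * sqn (H x))), (- k * dot (H x) xi * (1 + m)), (k * m * sqn xi); split.
  apply/eqP; rewrite -subr_eq0; apply/eqP.
  transitivity (k ^+ 2 * (- (dot (H x) xi ^+ 2 / (rho x * c - dot (H x) xi ^+ 2) ^+ 2)) *
    ((rho x * c) ^+ 2 - (gamma * p x + sqn (H x)) * sqn xi * (rho x * c)
     + gamma * p x * sqn xi * dot (H x) xi ^+ 2)); last by rewrite root mulr0.
  by rewrite /m /A; field.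
by apply/matrixP => a b; rewrite /pi_aux /w2 /form2_mx -/k -/m -/A !mx3E; ring.
Qed.

Lemma piproj_form2 j : exists al be de u v, al * de = be ^+ 2 /\
  piproj rho p H gamma j x xi = form2_mx al be de u v.
Proof.
case: (ord3P j) => ->.
- exists (sqn (cross xi (H x)))^-1, 0, 0, (cross xi (H x)), (cross xi (H x)).
  by rewrite piproj0E // /form2_mx !scale0r !addr0 mulr0 expr2 mulr0.
- have [al [be [de [det0 E]]]] := @pi_aux_form2 _ (cf2 rho p H gamma x xi) (or_introl erefl).
  by exists al, be, de, xi, (H x); rewrite /piproj /= E.
- have [al [be [de [det0 E]]]] := @pi_aux_form2 _ (cs2 rho p H gamma x xi) (or_intror erefl).
  by exists al, be, de, xi, (H x); rewrite /piproj /= E.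
Qed.

End Projectors.

Section ComplexSymbol.
Context {R : realType}.

Lemma cplx_mxE (M : 'M[R]_3) : cplx_mx M = map_mx (real_complex R) M.
Proof. by []. Qed.

Lemma invi : ('i%C)^-1 = - 'i%C :> R[i].
Proof.
have i_neq0 : 'i%C != 0 :> R[i].
  apply/eqP => i0; have := @sqr_i R; rewrite i0 expr2 mulr0 => /eqP.
  by rewrite eq_sym oppr_eq0 oner_eq0.
by apply: (mulfI i_neq0); rewrite mulfV // mulrN -expr2 sqr_i opprK.
Qed.

Lemma psubE (rho p : 'rV[R]_3 -> R) (H : 'rV[R]_3 -> 'rV[R]_3) gamma t x tau xi :
  psub rho p H gamma t x tau xi = 'i%C *: cplx_mx (psub_im rho p H gamma t x tau xi).
Proof.
rewrite /psub /p1 /psub_im; move: (_ + \sum_j _) (d2p2 _ _ _ _ _ _ _) => X D.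
rewrite !cplx_mxE map_mxD map_mxZ scalerDr scalerA -scaleNr.
by congr (_ + _ *: _); rewrite invfM invi fmorphV rmorph_nat mulrN opprK mulrC.
Qed.

End ComplexSymbol.

Theorem lemma5p4 (R : realType) (rho p : 'rV[R]_3 -> R) (H : 'rV[R]_3 -> 'rV[R]_3)
  (gamma : R) :
  smooth rho -> smooth p -> smoothV H ->
  (forall x, 0 < rho x) ->
  (forall x, grad p x + cross (H x) (curl H x) = 0) ->
  (forall x, 0 < c2 rho p gamma x) ->
  (forall x, 0 < sqn (H x)) ->
  (forall x, sqn (H x) != rho x * c2 rho p gamma x) ->
  forall (t : R) (x : 'rV[R]_3) (tau : R) (xi : 'rV[R]_3) (j : 'I_3),
    dot xi (H x) != 0 -> cross xi (H x) != 0 ->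
    qq rho p H gamma j x tau xi = 0 ->
    cplx_mx (tp2 rho p H gamma j x tau xi) *m psub rho p H gamma t x tau xi
      *m cplx_mx (piproj rho p H gamma j x xi) = 0.
Proof.
move=> _ sp sH rho_pos equilibrium c2_pos _ _ t x tau xi j dot_neq0 cross_neq0 q0.
rewrite tp2_char // psubE -scalemxAr -scalemxAl !cplx_mxE -!map_mxM.
have [al [be [de [u [v [det0 ->]]]]]] :=
  piproj_form2 rho p H gamma x xi (rho_pos x) (c2_pos x) dot_neq0 cross_neq0 j.
by rewrite form2_mx_antisym ?psub_im_antisym // map_mx0 scaler0.
Qed.
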